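(* Let $r\ge 0$ be a fixed integer. There is a constant $C>0$ (depending only on $r$) such that every $r$-cross-free hypergraph $H$ on $n$ vertices has at most $C n^{r+1}$ hyperedges (i.e. $\mathcal O(n^{r+1})$ hyperedges).
   Context: Hypergraphs have vertex set $V=[n]$ and are identified with their sets of hyperedges; $\overline A = V\setminus A$. $\mathcal K_r(n)$ is the class of hypergraphs $\mathcal E$ on $V$ satisfying: (R0) every $X\subseteq V$ with $|X|\le r$ is in $\mathcal E$; (R1) $A\in\mathcal E\Rightarrow V\setminus A\in\mathcal E$; (R2) $A,B\in\mathcal E$ and $|A\cap B|\ge r\Rightarrow A\cup B\in\mathcal E$. $\mathcal K^0_r(n)$ is the class of hypergraphs satisfying (R0) and (R1) only. For a hypergraph $H$ on $V$, $\mathrm{cl}_r(H)$ (resp. $\mathrm{cl}^0_r(H)$) is the intersection of all hypergraphs in $\mathcal K_r(n)$ (resp. $\mathcal K^0_r(n)$) containing $H$. Two sets $A,B\subseteq V$ are $r$-orthogonal if $\mathrm{cl}_r(\{A,B\})=\mathrm{cl}^0_r(\{A,B\})$, where $\{A,B\}$ is the hypergraph on $V$ with hyperedges $A$ and $B$. A hypergraph is $r$-cross-free if every pair of its hyperedges is $r$-orthogonal. *)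

(* Vertex set V = [n] is rendered as 'I_n; a hypergraph on V
   is a set of hyperedges, i.e. an element of {set {set 'I_n}}. *)
From mathcomp Require Import all_boot.
Set Implicit Arguments. Unset Strict Implicit. Unset Printing Implicit Defensive.

Section Hyper.
Variable n : nat.
Notation hgraph := {set {set 'I_n}}.

Definition R0 (r : nat) (E : hgraph) : bool :=
  [forall X : {set 'I_n}, (#|X| <= r) ==> (X \in E)].
Definition R1 (E : hgraph) : bool :=
  [forall A in E, ~: A \in E].
Definition R2 (r : nat) (E : hgraph) : bool :=
  [forall A in E, forall B in E, (r <= #|A :&: B|) ==> (A :|: B \in E)].

Definition inK (r : nat) (E : hgraph) : bool := [&& R0 r E, R1 E & R2 r E].
Definition inK0 (r : nat) (E : hgraph) : bool := R0 r E && R1 E.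

Definition cl (r : nat) (H : hgraph) : hgraph :=
  [set A | [forall E : hgraph, (inK r E && (H \subset E)) ==> (A \in E)]].
Definition cl0 (r : nat) (H : hgraph) : hgraph :=
  [set A | [forall E : hgraph, (inK0 r E && (H \subset E)) ==> (A \in E)]].

Definition orthogonal (r : nat) (A B : {set 'I_n}) : Prop :=
  cl r [set A; B] = cl0 r [set A; B].

Definition cross_free (r : nat) (H : hgraph) : Prop :=
  forall A B, A \in H -> B \in H -> A != B -> orthogonal r A B.
End Hyper.

(* If A and B are r-orthogonal, then every set P ∪ Q with P ∈ {A, ~A}, Q ∈ {B, ~B}
   and |P ∩ Q| >= r lies in cl_r {A, B} = cl^0_r {A, B}, hence is small, co-small
   or one of A, ~A, B, ~B; so P and Q are nested unless P ∪ Q misses at most r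
   points.  Applied to the minority sides X, Y of two hyperedges of equal size
   which share r points, this forces X = Y (for n > 4r, with one extra point to
   break the tie X = ~Y when r = 0).  Hence a hyperedge A of an r-cross-free
   hypergraph is determined by the first r elements of its minority side, by |A|
   and by one membership bit: at most 2 (n+1)^(r+1) hyperedges.  For n <= 4r the
   trivial bound 2^n suffices. *)
From mathcomp Require Import all_boot zify.
Set Implicit Arguments. Unset Strict Implicit. Unset Printing Implicit Defensive.

Definition sides (T : finType) (A : {set T}) : {set {set T}} := [set A; ~: A].

Section Sides.
Variable T : finType.
Implicit Types A B P Q X Y : {set T}.

Lemma setC_eq A B : (~: A == B) = (A == ~: B).
Proof. by rewrite -(inj_eq (@setC_inj _)) setCK. Qed.

Lemma setC_sides A P : (~: P \in sides A) = (P \in sides A).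
Proof. by rewrite !inE !setC_eq setCK orbC. Qed.

Lemma sides_eq A P : P \in sides A -> sides P = sides A.
Proof. by case/set2P => ->; rewrite // /sides setCK setUC. Qed.

Lemma set2_setC_sides A B U :
  (U \in [set A; B]) || (~: U \in [set A; B]) = (U \in sides A) || (U \in sides B).
Proof. by rewrite !inE !setC_eq -!orbA; congr (_ || _); rewrite orbCA. Qed.

Lemma setU_sides_subset P Q : P :|: Q \in sides P -> Q \subset P \/ P \subset Q.
Proof.
case/set2P => ePQ; first by left; rewrite -ePQ subsetUr.
right; have /disjoint_setI0 : [disjoint P & P].
  by rewrite disjoints_subset -ePQ subsetUl.
by rewrite setIid => ->; apply: sub0set.
Qed.

Lemma card_quadrants X Y :
  [/\ #|X :&: Y| + #|X :&: ~: Y| = #|X|, #|X :&: Y| + #|~: X :&: Y| = #|Y|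
    & #|X| + #|~: X :&: Y| + #|~: X :&: ~: Y| = #|T|].
Proof.
have := cardsID Y X; have := cardsID X Y; have := cardsID Y (~: X).
have := cardsC X; rewrite !setDE (setIC Y X) (setIC Y (~: X)).
by split; lia.
Qed.

End Sides.

Section Closures.
Variables n r : nat.
Implicit Types A B P Q X : {set 'I_n}.
Implicit Types H E : {set {set 'I_n}}.

Lemma clP H X :
  reflect (forall E, inK r E -> H \subset E -> X \in E) (X \in cl r H).
Proof.
rewrite inE; apply: (iffP forallP) => [h E KE HE | h E].
  by move/implyP: (h E); apply; rewrite KE.
by apply/implyP => /andP[]; apply: h.
Qed.

Lemma cl0P H X :
  reflect (forall E, inK0 r E -> H \subset E -> X \in E) (X \in cl0 r H).
Proof.
rewrite inE; apply: (iffP forallP) => [h E KE HE | h E].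
  by move/implyP: (h E); apply; rewrite KE.
by apply/implyP => /andP[]; apply: h.
Qed.

Lemma inK_sides E A P : inK r E -> A \in E -> P \in sides A -> P \in E.
Proof.
case/and3P=> _ /forallP R1E _ AE /set2P[] -> //.
by have /implyP := R1E A; apply.
Qed.

Lemma inK_setU E P Q : inK r E -> P \in E -> Q \in E -> r <= #|P :&: Q| ->
  P :|: Q \in E.
Proof.
case/and3P=> _ _ /forall_inP R2E PE QE rPQ.
by have /forall_inP/(_ Q QE)/implyP := R2E P PE; apply.
Qed.

Lemma setU_sides_cl A B P Q : P \in sides A -> Q \in sides B ->
  r <= #|P :&: Q| -> P :|: Q \in cl r [set A; B].
Proof.
move=> PA QB rPQ; apply/clP => E KE /subsetP ABE.
apply: inK_setU rPQ => //.
  by apply: inK_sides KE _ PA; apply: ABE; rewrite !inE eqxx.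
by apply: inK_sides KE _ QB; apply: ABE; rewrite !inE eqxx orbT.
Qed.

Lemma cl0_sub H :
  cl0 r H \subset
    [set X : {set 'I_n} | [|| #|X| <= r, #|~: X| <= r, X \in H | ~: X \in H]].
Proof.
apply/subsetP => X /cl0P; apply; last by apply/subsetP => Y HY; rewrite inE HY !orbT.
apply/andP; split; first by apply/forallP => Y; apply/implyP; rewrite inE => ->.
apply/forall_inP => Y; rewrite !inE setCK.
by case/or4P => ->; rewrite ?orbT.
Qed.

Lemma orthogonal_sides A B P Q : orthogonal r A B ->
  P \in sides A -> Q \in sides B -> r <= #|P :&: Q| ->
  [\/ P \subset Q, Q \subset P | #|~: P :&: ~: Q| <= r].
Proof.
move=> oAB PA QB rPQ.
have := setU_sides_cl PA QB rPQ; rewrite oAB => /(subsetP (cl0_sub _)).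
rewrite inE set2_setC_sides -(sides_eq PA) -(sides_eq QB) => /or3P[small | cosmall | ].
- constructor 1; apply: subset_trans (subsetUl P Q) _.
  have /eqP <- : P :&: Q == P :|: Q.
    by rewrite eqEcard (leq_trans small rPQ) andbT subIset ?subsetUl.
  exact: subsetIr.
- by constructor 3; rewrite -setCU.
case/orP => [/setU_sides_subset[] | ]; [by constructor 2 | by constructor 1 |].
by rewrite setUC => /setU_sides_subset[]; [constructor 1 | constructor 2].
Qed.

End Closures.

Lemma orthogonal_sides_eq n r (A B X Y : {set 'I_n}) (x : 'I_n) :
  4 * r < n -> orthogonal r A B -> X \in sides A -> Y \in sides B ->
  #|X| = #|Y| -> 2 * #|X| <= n -> r <= #|X :&: Y| -> (x \in X) = (x \in Y) ->
  X = Y.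
Proof.
move=> rn oAB XA YB eXY Xn rXY xXY.
have [XY | YX | small] := orthogonal_sides oAB XA YB rXY.
- by apply/eqP; rewrite eqEcard XY eXY leqnn.
- by apply/esym/eqP; rewrite eqEcard YX eXY leqnn.
have [qX qY qT] := card_quadrants X Y; rewrite card_ord in qT.
have YCB : ~: Y \in sides B by rewrite setC_sides.
have rXYC : r <= #|X :&: ~: Y| by lia.
have [/cards0_eq XY0 /cards0_eq XYC0] : #|X :&: Y| = 0 /\ #|~: X :&: ~: Y| = 0.
  have [XYC | YCX | ] := orthogonal_sides oAB XA YCB rXYC; last by rewrite setCK; lia.
  - move: XYC; rewrite -disjoints_subset => /disjoint_setI0 X0.
    by have := cards0 'I_n; rewrite -X0; lia.
  - move: YCX; rewrite -setCS -disjoints_subset => /disjoint_setI0 X0.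
    by have := cards0 'I_n; rewrite -X0; lia.
have : x \in X :&: Y \/ x \in ~: X :&: ~: Y.
  by rewrite !inE -xXY; case: (x \in X); [left | right].
by rewrite XY0 XYC0 in_set0; case.
Qed.

Section SmallSetCode.
Variables (T : finType) (r : nat).
Implicit Types S : {set T}.

Definition set_code S : {ffun 'I_r -> option T} :=
  [ffun i : 'I_r => nth None [seq Some x | x <- enum S] i].

Lemma mem_set_code S x : #|S| <= r -> (Some x \in codom (set_code S)) = (x \in S).
Proof.
move=> Sr; apply/codomP/idP => [[i] | xS].
  rewrite ffunE; case: (ltnP i (size (enum S))) => [iS | Si]; last first.
    by rewrite nth_default // size_map.
  by rewrite (nth_map x) // => -[->]; rewrite -mem_enum mem_nth.
have xr : index x (enum S) < r by rewrite (leq_trans _ Sr) // cardE index_mem mem_enum.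
exists (Ordinal xr); rewrite ffunE /= (nth_map x) ?nth_index ?mem_enum //.
by rewrite index_mem mem_enum.
Qed.

Lemma set_code_inj S1 S2 : #|S1| <= r -> #|S2| <= r ->
  set_code S1 = set_code S2 -> S1 = S2.
Proof. by move=> S1r S2r e; apply/setP => x; rewrite -!mem_set_code // e. Qed.

Definition take_set S : {set T} := [set x in take r (enum S)].

Lemma take_set_sub S : take_set S \subset S.
Proof. by apply/subsetP => x; rewrite inE => /mem_take; rewrite mem_enum. Qed.

Lemma card_take_set S : #|take_set S| = minn r #|S|.
Proof.
rewrite cardsE (card_uniqP (take_uniq r (enum_uniq (mem S)))) size_take -cardE.
by rewrite /minn; case: ltnP.
Qed.

Lemma take_set_id S : #|S| <= r -> take_set S = S.
Proof. by move=> Sr; rewrite /take_set take_oversize -?cardE // set_enum. Qed.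

End SmallSetCode.

Section MinoritySide.
Variable n : nat.
Implicit Types A B : {set 'I_n}.

Definition minority_side A := if 2 * #|A| <= n then A else ~: A.

Lemma minority_side_sides A : minority_side A \in sides A.
Proof. by rewrite /minority_side; case: ifP; rewrite !inE eqxx ?orbT. Qed.

Lemma card_minority_side A :
  #|minority_side A| = if 2 * #|A| <= n then #|A| else n - #|A|.
Proof.
by rewrite /minority_side; case: ifP => // _; rewrite cardsCs setCK card_ord.
Qed.

Lemma card_minority_side_le A : 2 * #|minority_side A| <= n.
Proof. by rewrite card_minority_side; case: ifP => //; lia. Qed.

Lemma minority_side_inj A B :
  #|A| = #|B| -> minority_side A = minority_side B -> A = B.
Proof. by rewrite /minority_side => ->; case: ifP => // _; apply: setC_inj. Qed.

End MinoritySide.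

Lemma cross_free_code_inj n r (H : {set {set 'I_n}}) (x : 'I_n) :
  4 * r < n -> cross_free r H ->
  {in H &, injective (fun A => (set_code r (take_set r (minority_side A)),
                               inord #|A| : 'I_n.+1, x \in minority_side A))}.
Proof.
move=> rn crH A B HA HB [ecode /(congr1 val) ecard ex].
have eAB : #|A| = #|B|.
  have card_lt (C : {set 'I_n}) : #|C| < n.+1.
    by rewrite ltnS (leq_trans (max_card _)) ?card_ord.
  by move: ecard; rewrite /= !inordK.
have [// | neAB] := eqVneq A B; apply: minority_side_inj => //.
set X := minority_side A; set Y := minority_side B.
have eXY : #|X| = #|Y| by rewrite !card_minority_side eAB.
have etake : take_set r X = take_set r Y.
  by apply: set_code_inj ecode; rewrite card_take_set geq_minl.
have [Xr | rX] := leqP #|X| r.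
  by rewrite -(take_set_id Xr) etake take_set_id // -eXY.
have rXY : r <= #|X :&: Y|.
  have <- : #|take_set r X| = r by rewrite card_take_set; lia.
  by rewrite subset_leq_card // subsetI take_set_sub etake take_set_sub.
exact: orthogonal_sides_eq rn (crH A B HA HB neAB) (minority_side_sides A)
  (minority_side_sides B) eXY (card_minority_side_le A) rXY ex.
Qed.

Lemma card_cross_free_le n r (H : {set {set 'I_n}}) :
  4 * r < n -> cross_free r H -> #|H| <= 2 * n.+1 ^ r.+1.
Proof.
move=> rn crH; pose x : 'I_n := Ordinal (leq_ltn_trans (leq0n _) rn).
rewrite -(card_in_imset (cross_free_code_inj (x := x) rn crH)).
apply: leq_trans (max_card _) _.
by rewrite !card_prod card_ffun card_option !card_ord card_bool -expnSr mulnC.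
Qed.

Lemma card_hypergraph_le n (H : {set {set 'I_n}}) : #|H| <= 2 ^ n.
Proof.
have := card_powerset [set: 'I_n]; rewrite cardsT card_ord => <-.
by apply/subset_leq_card/subsetP => X _; rewrite powersetE subsetT.
Qed.

Theorem theorem2 (r : nat) :
  exists C : nat, 0 < C /\
    forall (n : nat) (H : {set {set 'I_n}}),
      0 < n -> cross_free r H -> #|H| <= C * n ^ r.+1.
Proof.
exists (2 ^ (4 * r + 2)); split; first by rewrite expn_gt0.
move=> n H n_gt0 crH.
have [nr | rn] := leqP n (4 * r).
  apply: leq_trans (card_hypergraph_le H) _.
  by rewrite -[2 ^ n]muln1 leq_mul ?leq_pexp2l ?expn_gt0 ?n_gt0 //; lia.
apply: leq_trans (card_cross_free_le rn crH) _.
have Sn : n.+1 ^ r.+1 <= 2 ^ r.+1 * n ^ r.+1 by rewrite -expnMn leq_exp2r //; lia.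
rewrite (leq_trans (leq_mul (leqnn 2) Sn)) // mulnA -expnS leq_mul2r.
by rewrite leq_pexp2l ?orbT //; lia.
Qed.
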